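(* Let $V$ be a finite set and $n\ge 1$ an integer. The functions $m_G$, as $G$ ranges over all multigraphs on vertex set $V$ (self-loops allowed) with $|E(G)|\le n$, are linearly independent as functions of $(d_u)_{u\in V}\in(\mathbb{R}^n)^V$.
   Context: A multigraph $G$ on $V$ is a finite multiset $E(G)$ of edges $\{u,w\}$ with $u,w\in V$, where $u=w$ (a self-loop) is allowed. For vectors $d_u\in\mathbb{R}^n$ ($u\in V$), $m_G=\prod_{\{u,w\}\in E(G)}\langle d_u,d_w\rangle$, with multiplicity, where a self-loop at $u$ contributes the factor $\langle d_u,d_u\rangle$. *)

From mathcomp Require Import all_boot all_order all_algebra.
From mathcomp Require Import reals.
Set Implicit Arguments. Unset Strict Implicit. Unset Printing Implicit Defensive.
Import Order.TTheory GRing.Theory Num.Theory.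
Local Open Scope ring_scope.

(* An (unordered) edge {u,w} of a multigraph on V, self-loops allowed, is
   encoded as the nonempty set A := [set u; w] : {set V} (so #|A| = 1 for a
   self-loop, #|A| = 2 otherwise).  A multigraph G is encoded by its
   multiplicity function G : {set V} -> nat; it is a genuine multigraph when
   G A = 0 unless 1 <= #|A| <= 2. Multiplicities are stored in 'I_(n.+1)
   so that the (finitely many) multigraphs with at most n edges all live in
   the finite type mgraph V n. *)
Definition mgraph (V : finType) (n : nat) := {ffun {set V} -> 'I_n.+1}.

Definition is_edge (V : finType) (A : {set V}) : bool := (0 < #|A| <= 2)%N.

Definition nedges (V : finType) (n : nat) (G : mgraph V n) : nat :=
  (\sum_(A : {set V}) (G A : nat))%N.

Definition valid_mgraph (V : finType) (n : nat) (G : mgraph V n) : bool :=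
  [forall A : {set V}, (G A != 0 :> nat) ==> is_edge A] && (nedges G <= n)%N.

Definition dotp (R : realType) (n : nat) (x y : 'rV[R]_n) : R :=
  \sum_(k < n) x 0 k * y 0 k.

(* <d_u, d_w> for the edge A = {u, w}; for a self-loop A = {u} this is <d_u, d_u>. *)
Definition edge_val (R : realType) (V : finType) (n : nat)
    (d : V -> 'rV[R]_n) (A : {set V}) : R :=
  if [pick u in A] is Some u then
    let w := if [pick w in A :\ u] is Some w then w else u in
    dotp (d u) (d w)
  else 0.

Definition mG (R : realType) (V : finType) (n : nat) (G : mgraph V n)
    (d : V -> 'rV[R]_n) : R :=
  \prod_(A : {set V} | is_edge A) edge_val d A ^+ (G A : nat).

From mathcomp Require Import all_boot all_order all_algebra.
From mathcomp Require Import reals.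
Import Order.TTheory GRing.Theory Num.Theory.
Set Implicit Arguments. Unset Strict Implicit.
Local Open Scope ring_scope.

(* We prove more generally, by induction on the dimension k, that the m_G with
   |E(G)| <= k are independent as functions on (R^k)^V.  For k = 0 only the
   empty graph remains and its monomial is the constant 1.  For the step
   k -> k+1, fix an edge A and suppose the coefficients of all graphs using an
   edge strictly contained in A are already known to vanish.  Appending to
   each d_u (u in V) a coordinate equal to s on A and 0 off A adds s^2 to the
   inner product of the edge A and changes no other surviving edge, so the
   vanishing combination becomes a polynomial in t = <A> + s^2 vanishing on a
   ray; its coefficients, one per multiplicity j of A, vanish.  The j-th one
   is a vanishing combination in dimension k of graphs with at most k edges
   (j >= 1 copies of A removed), so the induction hypothesis kills every
   coefficient of a graph containing A.  Running over the edges by increasing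
   size leaves only the empty graph, which is handled as for k = 0. *)

Lemma coef_eq0_of_vanishing_on_ray (R : realDomainType) (D : nat)
    (alpha : 'I_D -> R) (a : R) :
  (forall t, a <= t -> \sum_(i < D) alpha i * t ^+ i = 0) ->
  forall i, alpha i = 0.
Proof.
move=> van i.
pose p : {poly R} := \sum_(l < D) alpha l *: 'X^l.
have pE t : p.[t] = \sum_(l < D) alpha l * t ^+ l.
  by rewrite horner_sum; apply: eq_bigr => l _; rewrite hornerZ hornerXn.
have coefp : p`_i = alpha i.
  rewrite coef_sum (bigD1 i) //= coefZ coefXn eqxx mulr1 big1 ?addr0 // => l li.
  by rewrite coefZ coefXn eq_sym (inj_eq val_inj) (negbTE li) mulr0.
suff p0 : p = 0 by rewrite -coefp p0 coef0.
apply/eqP; apply: contraT => pn0.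
pose rs := [seq `|a| + l%:R | l <- iota 0 (size p)].
have rootsp : all (root p) rs.
  apply/allP => _ /mapP [l _ ->]; rewrite /root pE van //.
  by rewrite (le_trans (ler_norm a)) // lerDl ler0n.
have uniq_rs : uniq rs.
  by rewrite map_inj_uniq ?iota_uniq // => x y /addrI /eqP; rewrite eqr_nat => /eqP.
by move: (max_poly_roots pn0 rootsp uniq_rs); rewrite size_map size_iota ltnn.
Qed.

Lemma edge_endpoints (R : realType) (V : finType) (A : {set V}) : is_edge A ->
  exists u w, [/\ u \in A, w \in A, (forall x, x \in A -> x = u \/ x = w) &
     forall k (d : V -> 'rV[R]_k), edge_val d A = dotp (d u) (d w)].
Proof.
case/andP => A_gt0 A_le2; rewrite /edge_val.
case: pickP => [u uA | A0]; last by move: A_gt0; rewrite eq_card0.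
case: pickP => [w | noother].
- rewrite in_setD1 => /andP [wu wA].
  exists u, w; split => // x xA; case: (eqVneq x u) => [->|xu]; first by left.
  have : (#|A :\ u| <= 1)%N by move: A_le2; rewrite (cardsD1 u A) uA.
  by move/card_le1_eqP => le1; right; apply: le1; rewrite in_setD1 ?xu ?wu.
- exists u, u; split => // x xA; left; apply/eqP; apply: contraT => xu.
  by move: (noother x); rewrite in_setD1 xu xA.
Qed.

Section Monomials.

Variables (R : realType) (V : finType) (N : nat).

(* The monomial m_H evaluated on configurations in dimension k (the
   multiplicity bound N and the dimension k are decoupled for the induction). *)
Definition monom (k : nat) (H : mgraph V N) (d : V -> 'rV[R]_k) : R :=
  \prod_(A : {set V} | is_edge A) edge_val d A ^+ (H A : nat).

Definition valid_upto (k : nat) (H : mgraph V N) : bool :=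
  [forall A : {set V}, (H A != 0 :> nat) ==> is_edge A] && (nedges H <= k)%N.

Definition upd (H : mgraph V N) (A : {set V}) (j : 'I_N.+1) : mgraph V N :=
  [ffun B => if B == A then j else H B].

Lemma upd_at (H : mgraph V N) A j : upd H A j A = j.
Proof. by rewrite ffunE eqxx. Qed.

Lemma upd_upd (H : mgraph V N) A i j : upd (upd H A i) A j = upd H A j.
Proof. by apply/ffunP => B; rewrite !ffunE; case: eqP. Qed.

Lemma upd_id (H : mgraph V N) A : upd H A (H A) = H.
Proof. by apply/ffunP => B; rewrite !ffunE; case: eqP => // ->. Qed.

Lemma nedges_upd (H : mgraph V N) A j :
  (nedges (upd H A j) + H A = nedges H + j)%N.
Proof.
rewrite /nedges (bigD1 A) //= [in RHS](bigD1 A) //= upd_at.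
rewrite (eq_bigr (fun B => (H B : nat))); last by move=> B /negbTE BA; rewrite ffunE BA.
by rewrite addnC addnA addnAC.
Qed.

Lemma valid_upd_drop k (H : mgraph V N) A (j : 'I_N.+1) :
  (0 < j)%N -> (H A = 0 :> nat) -> valid_upto k.+1 (upd H A j) -> valid_upto k H.
Proof.
move=> j_gt0 HA0 /andP [/forallP edgesH nedgesH]; apply/andP; split.
  apply/forallP => B; apply/implyP => HB.
  have BA : B != A by apply: contraNneq HB => ->; rewrite HA0.
  by have := edgesH B; rewrite ffunE (negbTE BA) HB.
have := nedges_upd H A j; rewrite HA0 addn0 => eq_nedges.
by rewrite -ltnS (leq_trans _ nedgesH) // eq_nedges -[X in (X < _)%N]addn0 ltn_add2l.
Qed.

Lemma slice_reindex (A : {set V}) (j : 'I_N.+1) (F : mgraph V N -> mgraph V N -> R) :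
  \sum_(H : mgraph V N | H A == ord0) F (upd H A j) H =
  \sum_(H : mgraph V N | H A == j) F H (upd H A ord0).
Proof.
rewrite [RHS](reindex_onto (fun H => upd H A j) (fun H => upd H A ord0)) /=; last first.
  by move=> H /eqP HA; rewrite upd_upd -HA upd_id.
apply: eq_big => H; last by move=> /eqP HA; rewrite upd_upd -HA upd_id.
rewrite upd_at eqxx upd_upd /=.
by apply/eqP/eqP => [HA | <-]; [rewrite -HA upd_id | rewrite upd_at].
Qed.

Definition extend k (d : V -> 'rV[R]_k) (A : {set V}) (s : R) : V -> 'rV[R]_k.+1 :=
  fun u => \row_(l < k.+1)
    (if unlift ord_max l is Some i then d u 0 i else if u \in A then s else 0).

Lemma dotp_extend k (d : V -> 'rV[R]_k) A s u w :
  dotp (extend d A s u) (extend d A s w) =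
  dotp (d u) (d w) + (if u \in A then s else 0) * (if w \in A then s else 0).
Proof.
rewrite /dotp big_ord_recr /= !mxE unlift_none; congr (_ + _).
apply: eq_bigr => i _; rewrite !mxE.
have -> : widen_ord (leqnSn k) i = lift ord_max i.
  by apply: val_inj; rewrite /= /bump leqNgt ltn_ord.
by rewrite liftK.
Qed.

Lemma monom_extend k (d : V -> 'rV[R]_k) A s (H : mgraph V N) :
  is_edge A -> (forall B, is_edge B -> B \proper A -> (H B = 0 :> nat)) ->
  monom H (extend d A s) = (edge_val d A + s ^+ 2) ^+ (H A) * monom (upd H A ord0) d.
Proof.
move=> eA no_sub.
rewrite /monom (bigD1 A eA) [X in _ = _ * X](bigD1 A eA) /= upd_at expr0 mul1r.
congr (_ * _).
  have [u [w [uA wA _ valA]]] := edge_endpoints R eA.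
  by rewrite !valA dotp_extend uA wA expr2.
apply: eq_bigr => B /andP [eB BA]; rewrite ffunE (negbTE BA).
have [u [w [uB wB Bx valB]]] := edge_endpoints R eB.
rewrite !valB dotp_extend.
case: (boolP (u \in A)) => uA; case: (boolP (w \in A)) => wA;
  rewrite ?mul0r ?mulr0 ?addr0 //.
have BsA : B \subset A by apply/subsetP => x /Bx [->|->].
by rewrite no_sub ?expr0 // properEneq BA BsA.
Qed.

(* Extracting the coefficient of t^j (t = <A> + s^2) from a vanishing
   combination in dimension k+1 gives a vanishing combination in dimension k
   over the slice H A = j, with the copies of A removed. *)
Lemma slice_sum_eq0 k (c : mgraph V N -> R) (A : {set V}) :
  (forall d : V -> 'rV[R]_k.+1, \sum_H c H * monom H d = 0) -> is_edge A ->
  (forall B, is_edge B -> B \proper A -> forall H : mgraph V N, (0 < H B)%N -> c H = 0) ->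
  forall (d : V -> 'rV[R]_k) (j : 'I_N.+1),
    \sum_(H : mgraph V N | H A == j) c H * monom (upd H A ord0) d = 0.
Proof.
move=> van eA no_sub d.
pose alpha (j : 'I_N.+1) :=
  \sum_(H : mgraph V N | H A == j) c H * monom (upd H A ord0) d.
apply: (@coef_eq0_of_vanishing_on_ray R N.+1 alpha (edge_val d A)) => t t_ge.
rewrite -[RHS](van (extend d A (Num.sqrt (t - edge_val d A)))).
rewrite (partition_big (fun H : mgraph V N => H A) predT) //=.
apply: eq_bigr => i _; rewrite /alpha mulr_suml; apply: eq_bigr => H /eqP HA.
have [->|cH] := eqVneq (c H) 0; first by rewrite !mul0r.
rewrite monom_extend // => [|B eB BA]; last first.
  by apply/eqP; rewrite -leqn0 leqNgt; apply: contra cH => /(no_sub B eB BA H) ->.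
by rewrite sqr_sqrtr ?subr_ge0 // addrC subrK HA mulrAC -mulrA.
Qed.

(* If only edgeless graphs carry nonzero coefficients, a single vanishing
   evaluation kills them: the edgeless graph is unique and its monomial is 1. *)
Lemma edgeless_support k (c : mgraph V N -> R) (d : V -> 'rV[R]_k) :
  (forall H, c H != 0 -> forall A, (H A = 0 :> nat)) ->
  \sum_H c H * monom H d = 0 -> forall H, c H = 0.
Proof.
move=> edgeless van H; have [//|cH] := eqVneq (c H) 0.
have monomH : monom H d = 1 by rewrite /monom big1 // => A _; rewrite edgeless // expr0.
move: van; rewrite (bigD1 H) //= big1 ?addr0 ?monomH ?mulr1 => [/eqP|H' H'H].
  by rewrite (negbTE cH).
have [->|cH'] := eqVneq (c H') 0; first by rewrite mul0r.
case/eqP: H'H; apply/ffunP => A; apply: val_inj.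
by rewrite /= (edgeless _ cH') (edgeless _ cH).
Qed.

Definition indep_upto (k : nat) : Prop :=
  forall c : mgraph V N -> R, (forall H, ~~ valid_upto k H -> c H = 0) ->
  (forall d : V -> 'rV[R]_k, \sum_H c H * monom H d = 0) -> forall H, c H = 0.

Lemma indep_upto0 : indep_upto 0.
Proof.
move=> c supp van; apply: (edgeless_support _ (van (fun _ => 0))) => H cH A.
have /andP [_] : valid_upto 0 H by apply: contraR cH => /supp ->; rewrite eqxx.
by rewrite leqn0 /nedges sum_nat_eq0 => /forallP /(_ A) /eqP.
Qed.

Lemma coef_eq0_containing_edge k (c : mgraph V N -> R) (A : {set V}) :
  indep_upto k ->
  (forall H, ~~ valid_upto k.+1 H -> c H = 0) ->
  (forall d : V -> 'rV[R]_k.+1, \sum_H c H * monom H d = 0) ->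
  is_edge A ->
  (forall B, is_edge B -> B \proper A -> forall H : mgraph V N, (0 < H B)%N -> c H = 0) ->
  forall H : mgraph V N, (0 < H A)%N -> c H = 0.
Proof.
move=> IH supp van eA no_sub H HA.
pose c' (H' : mgraph V N) := if H' A == ord0 then c (upd H' A (H A)) else 0.
have := IH c' _ _ (upd H A ord0).
rewrite /c' upd_at eqxx upd_upd upd_id; apply => [H' | d].
  case: eqP => // /eqP H'A0 nv; apply/eqP; apply: contraR nv => cH'.
  apply: (valid_upd_drop (A := A) HA); first by rewrite (eqP H'A0).
  by apply: contraR cH' => /supp ->; rewrite eqxx.
rewrite -[RHS](slice_sum_eq0 van eA no_sub d (H A)).
rewrite -(slice_reindex A (H A) (fun G G' => c G * monom G' d)) [RHS]big_mkcond /=.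
by apply: eq_bigr => H' _; case: ifP => // _; rewrite mul0r.
Qed.

(* Step k -> k+1: edges A are treated by strong induction on #|A|, after
   which only edgeless graphs can carry nonzero coefficients. *)
Lemma indep_upto_succ k : indep_upto k -> indep_upto k.+1.
Proof.
move=> IH c supp van.
have edges_vanish m A : is_edge A -> (#|A| <= m)%N ->
    forall H : mgraph V N, (0 < H A)%N -> c H = 0.
  elim: m A => [|m IHm] A eA Am.
    by case/andP: eA => A_gt0 _; move: (leq_trans A_gt0 Am).
  apply: coef_eq0_containing_edge IH supp van eA _ => B eB BA.
  by apply: IHm eB _; rewrite -ltnS (leq_trans (proper_card BA) Am).
apply: (edgeless_support _ (van (fun _ => 0))) => H cH A.
have /andP [/forallP edgesH _] : valid_upto k.+1 H.
  by apply: contraR cH => /supp ->; rewrite eqxx.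
have [eA | neA] := boolP (is_edge A).
  apply/eqP; rewrite -leqn0 leqNgt; apply: contra cH => HA.
  by rewrite (edges_vanish _ A eA (leqnn _) H HA).
by apply/eqP; move: (edgesH A); rewrite (negbTE neA) implybF negbK.
Qed.

Lemma indep_upto_all k : indep_upto k.
Proof. by elim: k => [|k IH]; [exact: indep_upto0 | exact: indep_upto_succ]. Qed.

End Monomials.

(* The theorem is the case k = N = n, after extending c by zero outside the
   multigraphs with at most n edges. *)
Theorem mainTheorem1 (R : realType) (V : finType) (n : nat) (hn : (0 < n)%N)
    (c : mgraph V n -> R) :
  (forall d : V -> 'rV[R]_n,
      \sum_(G : mgraph V n | valid_mgraph G) c G * mG G d = 0) ->
  forall G : mgraph V n, valid_mgraph G -> c G = 0.
Proof.
move=> van G vG.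
pose c' H := if valid_mgraph H then c H else 0.
have := @indep_upto_all R V n n c' _ _ G; rewrite /c' vG; apply => [H | d].
  by case: ifP => // vH; rewrite /valid_upto -/(valid_mgraph H) vH.
rewrite -[RHS](van d) [RHS]big_mkcond; apply: eq_bigr => H _.
by case: ifP => // _; rewrite mul0r.
Qed.
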